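(* In the standing setup, let $T$ be a valid partial table, let $T(i,b)=\emptyset$, let $c$ be a column, and suppose there are $r$ distinct $(i,b)$-addable elements in $B_{i,c}$. Then either one of these elements $x$ satisfies that $C_c+x$ is independent, or there are at least $r$ positions in column $c$ that are $(i,b)$-removable.
   Context: Standing setup: $M$ is a matroid of rank $n$ on ground set $E$; $f\le n$ is a positive integer; for each $i\in\{1,\dots,f\}$ and $j\in\{1,\dots,n\}$, $B_{i,j}$ is a basis of $M$, and the sets $B_{i,j}$ are pairwise disjoint. A valid partial table $T$ assigns to each position $(i,j)\in[f]\times[n]$ either the symbol $\emptyset$ (the position is empty) or an element $T(i,j)\in B_{i,j}$, such that for every row $i$ the set $S_i=\{T(i,j):T(i,j)\ne\emptyset\}$ is independent and for every column $j$ the set $C_j=\{T(i,j):T(i,j)\neq\emptyset\}$ is independent. Notation: for a set $A$ and an element $z$, ''$A+z$ is independent'' means $z\notin A$ and $A\cup\{z\}$ is independent; $A-z$ denotes $A\setminus\{z\}$ for $z\in A$; expressions such as $A-z+w$ are read left to right with the same convention. Definitions (with $T(i,b)=\emptyset$): an element $x\in B_{i,c}$ is $(i,b)$-addable if either (1) $T(i,c)=\emptyset$ and both $S_i+x$ and $C_c+x$ are independent, or (2) $T(i,c)=x'\neq\emptyset$ and there is $y\in B_{i,b}$ such that $C_b+y$ and $S_i-x'+y+x$ are independent. A position $(j,c)$ with $T(j,c)=y'\neq\emptyset$ is $(i,b)$-removable if there is an $(i,b)$-addable element $x\in B_{i,c}$ such that $C_c-y'+x$ is independent. *)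

From mathcomp Require Import all_boot.
Set Implicit Arguments. Unset Strict Implicit. Unset Printing Implicit Defensive.

Section Matroids.
Variable E : finType.
Variable indep : {set E} -> bool.

Definition is_matroid : Prop :=
  [/\ indep set0,
      (forall A B : {set E}, A \subset B -> indep B -> indep A) &
      (forall A B : {set E}, indep A -> indep B -> #|A| < #|B| ->
          exists2 x, x \in B :\: A & indep (x |: A))].

Definition is_basis (B : {set E}) : Prop :=
  indep B /\ forall X : {set E}, B \proper X -> ~~ indep X.

Definition has_rank (n : nat) : Prop :=
  forall B, is_basis B -> #|B| = n.

Definition plus_indep (A : {set E}) (z : E) : bool :=
  (z \notin A) && indep (z |: A).

Variables f n : nat.
Variable B : 'I_f -> 'I_n -> {set E}.
Variable T : 'I_f -> 'I_n -> option E.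

Definition rowset (i : 'I_f) : {set E} := [set x | [exists j, T i j == Some x]].
Definition colset (j : 'I_n) : {set E} := [set x | [exists i, T i j == Some x]].

Definition valid_table : Prop :=
  [/\ (forall i j x, T i j = Some x -> x \in B i j),
      (forall i, indep (rowset i)) &
      (forall j, indep (colset j))].

Definition addable (i : 'I_f) (b c : 'I_n) (x : E) : Prop :=
  x \in B i c /\
  match T i c with
  | None => plus_indep (rowset i) x && plus_indep (colset c) x
  | Some x' =>
      exists2 y, y \in B i b &
        plus_indep (colset b) y /\
        (* S_i - x' + y + x, read left to right *)
        (y \notin rowset i :\ x') /\ plus_indep (y |: (rowset i :\ x')) x
  end.

Definition removable (i : 'I_f) (b : 'I_n) (j : 'I_f) (c : 'I_n) : Prop :=
  exists y', T j c = Some y' /\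
    exists x, addable i b c x /\ plus_indep (colset c :\ y') x.

End Matroids.

From mathcomp Require Import all_boot.

(* Grow the independent set X of addable elements inside X \cup C_c to a
   maximal independent set M.  If no x in X extends C_c, augmentation forces
   |M| = |C_c|.  The |X| elements y of C_c outside M \ X are then each
   exchangeable: augmenting C_c - y from M can only add an element of X.
   Distinct such y sit at distinct positions of column c, all removable. *)

Set Implicit Arguments.
Unset Strict Implicit.
Unset Printing Implicit Defensive.

Section MatroidExchange.

Variables (E : finType) (indep : {set E} -> bool).
Hypothesis indep_sub : forall A B : {set E}, A \subset B -> indep B -> indep A.
Hypothesis indep_aug : forall A B : {set E}, indep A -> indep B -> #|A| < #|B| ->
  exists2 x, x \in B :\: A & indep (x |: A).

Lemma indep_card_le_of_no_aug (A M : {set E}) :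
  indep A -> indep M -> (forall z, z \in M :\: A -> ~~ indep (z |: A)) ->
  #|M| <= #|A|.
Proof.
move=> indA indM noaug; rewrite leqNgt; apply/negP => ltAM.
by have [z /noaug/negP] := indep_aug indA indM ltAM.
Qed.

Lemma extend_indep_within (X Y : {set E}) : X \subset Y -> indep X ->
  exists M : {set E}, [/\ X \subset M, M \subset Y, indep M &
    forall A : {set E}, A \subset Y -> indep A -> #|A| <= #|M|].
Proof.
move=> XY indX; pose P (M : {set E}) := [&& X \subset M, M \subset Y & indep M].
have PX : P X by rewrite /P subxx XY indX.
case: (@arg_maxnP _ X P (fun M => #|M|) PX) => M /and3P [XM MY indM] Mmax.
exists M; split=> // A AY indA; apply: indep_card_le_of_no_aug => // a.
case/setDP=> aA aM; apply/negP => indaM.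
have /Mmax : P (a |: M).
  rewrite /P subUset sub1set (subsetP AY) ?indaM ?MY ?andbT //=.
  exact: subset_trans XM (subsetUr _ _).
by rewrite /= cardsU1 aM add1n ltnn.
Qed.

Lemma plus_indep_exchanges (A X : {set E}) :
  indep A -> indep X -> (forall x, x \in X -> ~~ plus_indep indep A x) ->
  exists D : {set E}, [/\ D \subset A, #|X| <= #|D| &
    forall y, y \in D -> exists2 x, x \in X & plus_indep indep (A :\ y) x].
Proof.
move=> indA indX noaug.
have [M [XM MXA indM Mmax]] := extend_indep_within (subsetUl X A) indX.
have eqAM : #|A| = #|M|.
  apply/eqP; rewrite eqn_leq Mmax ?subsetUr //=.
  apply: indep_card_le_of_no_aug => // z /setDP [zM zA].
  have zX : z \in X by move: (subsetP MXA z zM); rewrite inE (negbTE zA) orbF.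
  by move: (noaug z zX); rewrite /plus_indep zA.
have MXA' : M :\: X \subset A.
  apply/subsetP => z /setDP [zM zX].
  by move: (subsetP MXA z zM); rewrite inE (negbTE zX).
exists (A :\: (M :\: X)); split; first exact: subsetDl.
  by rewrite cardsD (setIidPr MXA') cardsD (setIidPr XM) eqAM subKn ?subset_leq_card.
move=> y /setDP [yA yMX].
have indAy : indep (A :\ y) by apply: indep_sub indA; apply: subD1set.
have ltAyM : #|A :\ y| < #|M| by rewrite -eqAM (cardsD1 y A) yA.
have [z /setDP [zM zAy] indz] := indep_aug indAy indM ltAyM.
(* An element of M :\: X lies in A, and not at y, so it would lie in A :\ y. *)
have zX : z \in X.
  apply: contraNT yMX => zX; suff <- : z = y by rewrite inE zX.
  by apply/eqP; move: zAy; rewrite in_setD1 (subsetP MXA') ?inE ?zX // andbT negbK.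
by exists z; rewrite // /plus_indep zAy.
Qed.

End MatroidExchange.

Lemma card_le_preimset_Some (I T : finType) (g : I -> option T) (D : {set T}) :
  D \subset [set y | [exists j, g j == Some y]] ->
  #|D| <= #|g @^-1: (Some @: D)|.
Proof.
move=> Dg; rewrite -(card_imset D Some_inj).
apply: leq_trans (leq_imset_card g _); apply: subset_leq_card.
apply/subsetP => _ /imsetP [y yD ->].
have /[!inE] /existsP [j /eqP gj] := subsetP Dg y yD.
by apply/imsetP; exists j; rewrite // inE gj imset_f.
Qed.

Theorem mainTheorem5 (E : finType) (indep : {set E} -> bool) (n f : nat)
  (B : 'I_f -> 'I_n -> {set E}) (T : 'I_f -> 'I_n -> option E)
  (i : 'I_f) (b c : 'I_n) (r : nat) (X : {set E}) :
  is_matroid indep -> has_rank indep n ->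
  0 < f -> f <= n ->
  (forall i j, is_basis indep (B i j)) ->
  (forall i j i' j', (i, j) != (i', j') -> [disjoint B i j & B i' j']) ->
  valid_table indep B T ->
  T i b = None ->
  #|X| = r ->
  (forall x, x \in X -> addable indep B T i b c x) ->
  (exists2 x, x \in X & plus_indep indep (colset T c) x) \/
  (exists R : {set 'I_f}, r <= #|R| /\
     forall j, j \in R -> removable indep B T i b j c).
Proof.
move=> [_ indep_sub indep_aug] _ _ _ basis _ [_ _ col_indep] _ cardX addX.
have indX : indep X.
  by apply: indep_sub (proj1 (basis i c)); apply/subsetP => x /addX [].
case: (boolP [exists x in X, plus_indep indep (colset T c) x]).
  by case/exists_inP => x xX hx; left; exists x.
rewrite negb_exists_in => /forall_inP noaug; right.
have [D [Dcol leXD exchD]] :=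
  plus_indep_exchanges indep_sub indep_aug (col_indep c) indX noaug.
exists ((fun j => T j c) @^-1: (Some @: D)); split.
  by rewrite -cardX (leq_trans leXD) ?card_le_preimset_Some.
move=> j; rewrite inE => /imsetP [y yD Tj]; exists y; split=> //.
by have [x xX hx] := exchD y yD; exists x; split; first exact: addX.
Qed.
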